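(* The Minimax SCC $M$ coincides with the Borda SCC $Bor$ (as functions on $\mathcal P$) if and only if $n=2$.
   Context: Let $n,h\ge2$, $N=\{1,\dots,n\}$, $H=\{1,\dots,h\}$; $\mathcal P$ is the set of $h$-tuples $p$ of linear orders on $N$; $x>_{p_i}y$ means $x\neq y$ and $p_i$ ranks $x$ above $y$; $\mathrm{rank}_{p_i}(x)=|\{y: y>_{p_i}x\}|+1$. $M(p)=\mathrm{argmin}_{x\in N}\max_{y\neq x}|\{i: y>_{p_i}x\}|$ and $Bor(p)=\mathrm{argmax}_{x\in N}\sum_{i=1}^h(n-\mathrm{rank}_{p_i}(x))$. *)

From mathcomp Require Import all_boot all_order all_fingroup.
Set Implicit Arguments. Unset Strict Implicit. Unset Printing Implicit Defensive.

(* Alternatives N = {1..n} are encoded as 'I_n, voters H = {1..h} as 'I_h.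
   A linear order on 'I_n is encoded by its position permutation
   sigma : {perm 'I_n}: sigma x is the (0-based) position of x, position 0
   being the top.  Every linear order on a finite set corresponds to exactly
   one such bijection. *)
Definition lorder (n : nat) := {perm 'I_n}.

Definition above n (s : lorder n) (x y : 'I_n) : bool := s x < s y.

Definition rank n (s : lorder n) (x : 'I_n) : nat :=
  #|[set y | above s y x]| + 1.

Definition profile (n h : nat) := {ffun 'I_h -> lorder n}.

Definition nprefer n h (p : profile n h) (y x : 'I_n) : nat :=
  #|[set i : 'I_h | above (p i) y x]|.

Definition minimax_score n h (p : profile n h) (x : 'I_n) : nat :=
  \max_(y | y != x) nprefer p y x.

Definition Minimax n h (p : profile n h) : {set 'I_n} :=
  [set x | [forall z, minimax_score p x <= minimax_score p z]].

Definition borda_score n h (p : profile n h) (x : 'I_n) : nat :=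
  \sum_(i < h) (n - rank (p i) x).

Definition Borda n h (p : profile n h) : {set 'I_n} :=
  [set x | [forall z, borda_score p z <= borda_score p x]].

From mathcomp Require Import all_boot all_order all_fingroup.
From mathcomp Require Import zify.

(* For two alternatives every voter ranks x either first, contributing one
   point to its Borda score, or second, contributing one to its pairwise defeat
   by the other alternative; hence the Minimax score and the Borda score of x
   add up to h, and minimizing one is maximizing the other.
   For n >= 3, let m = h/2 voters rank b > c > a > ... and the others
   a > b > c > ....  Then b is always a Borda winner, since it gains 2 points
   over a from the first group and loses 1 from the second.  If both rules
   agreed, b would be a Minimax winner; its Minimax score h - m exceeds a's,
   which is at most m, unless h = 2m, and then a is a Minimax winner too while
   b beats a by m > 0 Borda points. *)

Lemma big_ord_ltn_ite (N k A B : nat) : k <= N ->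
  \sum_(i < N) (if i < k then A else B) = k * A + (N - k) * B.
Proof.
move=> le_kN; rewrite -(big_mkord xpredT (fun i => if i < k then A else B)).
rewrite (big_cat_nat (leq0n k) le_kN) /=.
rewrite (@eq_big_nat _ _ _ 0 k _ (fun=> A)); last by move=> i /andP[_ ->].
rewrite (@eq_big_nat _ _ _ k N _ (fun=> B)); last first.
  by move=> i /andP[le_ki _]; rewrite ltnNge le_ki.
by rewrite !sum_nat_const_nat subn0.
Qed.

Lemma card_set_ord (N : nat) (P : pred 'I_N) :
  #|[set i | P i]| = \sum_(i < N) (if P i then 1 else 0).
Proof. by rewrite -sum1_card big_mkcond; apply: eq_bigr => i _; rewrite inE. Qed.

Lemma card_ord_ltn (N k : nat) : k <= N -> #|[set i : 'I_N | i < k]| = k.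
Proof. by move=> le_kN; rewrite card_set_ord big_ord_ltn_ite //; lia. Qed.

Lemma card_ord_geq (N k : nat) : k <= N -> #|[set i : 'I_N | ~~ (i < k)]| = N - k.
Proof.
move=> le_kN; rewrite card_set_ord.
rewrite (eq_bigr (fun i : 'I_N => if i < k then 0 else 1)).
  by rewrite big_ord_ltn_ite //; lia.
by move=> i _; case: (i < k).
Qed.

Lemma argmin_argmax_compl (T : finType) (f g : T -> nat) (c : nat) :
  (forall x, f x + g x = c) ->
  [set x | [forall z, f x <= f z]] = [set x | [forall z, g z <= g x]].
Proof.
move=> fgc; apply/setP => x; rewrite !inE; apply: eq_forallb => z.
by move: (fgc x) (fgc z) => ? ?; apply/idP/idP; lia.
Qed.

Lemma rank_perm (n : nat) (s : lorder n) (x : 'I_n) : rank s x = (s x).+1.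
Proof.
rewrite /rank addn1 -(card_imset _ (@perm_inj _ s)); congr S.
have -> : [set s y | y in [set y | above s y x]] = [set j : 'I_n | j < s x].
  apply/setP => j; rewrite inE; apply/imsetP/idP.
    by case=> y; rewrite inE /above => lt_yx ->.
  by move=> lt_jx; exists (s^-1 j)%g; rewrite ?inE /above permKV.
exact/card_ord_ltn/ltnW.
Qed.

Lemma borda_scoreE (n h : nat) (p : profile n h) (x : 'I_n) :
  borda_score p x = \sum_(i < h) (n - (p i x).+1).
Proof. by apply: eq_bigr => i _; rewrite rank_perm. Qed.

Section TwoAlternatives.
Variables (h : nat) (p : profile 2 h).

Lemma minimax_score2 (x y : 'I_2) : y != x -> minimax_score p x = nprefer p y x.
Proof.
move=> neq_yx; rewrite /minimax_score (big_pred1 y) // => z /=.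
by move: neq_yx; case: x => [[|[|?]] ?] //; case: y => [[|[|?]] ?] //;
  case: z => [[|[|?]] ?].
Qed.

Lemma minimax_borda_score2 (x : 'I_2) : minimax_score p x + borda_score p x = h.
Proof.
have [y neq_yx] : exists y, y != x.
  by exists (if x == ord0 then ord_max else ord0); case: x => [[|[|?]] ?].
rewrite (minimax_score2 _ _ neq_yx) borda_scoreE /nprefer card_set_ord -big_split.
rewrite -[RHS]card_ord -sum1_card; apply: eq_bigr => i _ /=.
have : p i x != p i y by apply: contra neq_yx => /eqP/perm_inj ->.
by rewrite /above; case: (p i x) => [[|[|?]] ?]; case: (p i y) => [[|[|?]] ?].
Qed.

Lemma Minimax_Borda2 : Minimax p = Borda p.
Proof. exact: argmin_argmax_compl minimax_borda_score2. Qed.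

End TwoAlternatives.

Section ThreeAlternatives.
Variables (n' h : nat).
Hypothesis le2h : 2 <= h.
Local Notation n := n'.+3.

Let a : 'I_n := ord0.
Let b : 'I_n := inord 1.
Let c : 'I_n := inord 2.

Let val_a : nat_of_ord a = 0. Proof. by []. Qed.
Let val_b : nat_of_ord b = 1. Proof. by rewrite inordK. Qed.
Let val_c : nat_of_ord c = 2. Proof. by rewrite inordK. Qed.

Let neq_ab : a != b. Proof. by rewrite -val_eqE /= val_b. Qed.
Let neq_ac : a != c. Proof. by rewrite -val_eqE /= val_c. Qed.
Let neq_bc : b != c. Proof. by rewrite -val_eqE /= val_b val_c. Qed.

Let val_gt0 (z : 'I_n) : z != a -> 0 < z.
Proof. by rewrite lt0n; apply: contra => /eqP z0; apply/eqP/val_inj. Qed.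

(* the ranking b > c > a > d > ..., as positions *)
Let bca : lorder n := (tperm a c * tperm a b)%g.

Let bca_a : bca a = c. Proof. by rewrite permM tpermL tpermD // eq_sym. Qed.
Let bca_b : bca b = a. Proof. by rewrite permM (tpermD neq_ab) ?tpermR // eq_sym. Qed.

Let m := h./2.
Let P : profile n h := [ffun i : 'I_h => if i < m then bca else 1%g].

Let PE (i : 'I_h) (x : 'I_n) : P i x = if i < m then bca x else x.
Proof. by rewrite ffunE; case: (i < m); rewrite ?perm1. Qed.

Let borda_scoreP (x : 'I_n) :
  borda_score P x = m * (n - (bca x).+1) + (h - m) * (n - x.+1).
Proof.
rewrite borda_scoreE -big_ord_ltn_ite; last by rewrite /m; lia.
by apply: eq_bigr => i _; rewrite PE; case: (i < m).
Qed.

Let minimax_score_a : minimax_score P a <= m.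
Proof.
apply/bigmax_leqP => y _; rewrite -[m in _ <= m](@card_ord_ltn h m); last by lia.
by apply/subset_leq_card/subsetP => i; rewrite !inE /above !PE; case: (i < m).
Qed.

Let minimax_score_other (z : 'I_n) : z != a -> h - m <= minimax_score P z.
Proof.
move=> neq_za; have neq_az : a != z by rewrite eq_sym.
apply: leq_trans (@leq_bigmax_cond _ (fun y => y != z) _ a neq_az).
rewrite /nprefer -card_ord_geq; last by lia.
apply/subset_leq_card/subsetP => i; rewrite !inE /above !PE.
by move/negbTE => ->; rewrite val_a val_gt0.
Qed.

Let b_in_Borda : b \in Borda P.
Proof.
rewrite inE; apply/forallP => z; rewrite !borda_scoreP bca_b val_a val_b.
have [->|neq_za] := eqVneq z a; first by rewrite bca_a val_c; rewrite /m; nia.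
have := val_gt0 _ neq_za; rewrite /m; nia.
Qed.

Lemma Minimax_Borda_counterexample : exists p : profile n h, Minimax p != Borda p.
Proof.
exists P; apply/eqP => MB.
have : b \in Minimax P by rewrite MB.
rewrite inE => /forallP/(_ a) b_le_a.
have h_even : h = 2 * m.
  have neq_ba : b != a by rewrite eq_sym.
  by have := minimax_score_other _ neq_ba; rewrite /m; lia.
have : a \in Borda P.
  rewrite -MB inE; apply/forallP => z; have [->//|neq_za] := eqVneq z a.
  by have := minimax_score_other _ neq_za; have := minimax_score_a; rewrite /m; lia.
rewrite inE => /forallP/(_ b); rewrite !borda_scoreP bca_a bca_b val_a val_b val_c.
rewrite /m in h_even *; nia.
Qed.

End ThreeAlternatives.

Theorem corollary1 (n h : nat) (hn : 2 <= n) (hh : 2 <= h) :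
  (forall p : profile n h, Minimax p = Borda p) <-> n = 2.
Proof.
split=> [MB|->]; last exact: Minimax_Borda2.
case: n hn MB => [|[|[|n']]] // _ MB.
have [p /eqP] := Minimax_Borda_counterexample n' h hh.
by rewrite MB.
Qed.
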